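(* Let $\Gamma$ be a countably infinite residually finite group and $\{\Gamma_n\}_{n\in\mathbb N}$ a strictly decreasing sequence of finite-index normal subgroups with $\bigcap_n\Gamma_n=\{e_\Gamma\}$ and $[\Gamma_n:\Gamma_{n+1}]>2$ for all $n$. Let $X=\varprojlim\Gamma/\Gamma_n$ with the left translation action of $\Gamma$ and quotient maps $\pi_n:X\to\Gamma/\Gamma_n$. For $n\ge2$ choose $\gamma_n\in\Gamma_{n-1}\setminus\Gamma_n$, let $C_n=\pi_n^{-1}(\gamma_n\Gamma_n)$, $X_+=\bigcup_{n\ge2}C_n$, $X_-=X\setminus(X_+\cup\{e_\Gamma\})$, and define $f:X\setminus\{e_\Gamma\}\to\{1,-1\}$ by $f=1$ on $X_+$ and $f=-1$ on $X_-$. Then the McMahon extension action $\Gamma\curvearrowright X_f$ associated to $(X, e_\Gamma, f)$ is null.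
   Context: $X=\varprojlim\Gamma/\Gamma_n$ is the compact metrizable group of compatible sequences in $\prod_n\Gamma/\Gamma_n$; $\Gamma$ embeds densely and acts minimally and freely by left translation. Under the hypotheses, $f$ is continuous and cannot be extended continuously to $X$. McMahon extension: the (unique up to conjugacy) minimal continuous action $\Gamma\curvearrowright X_f$ on a compact metrizable space with a $\Gamma$-equivariant continuous surjection $\pi_f:X_f\to X$ such that $\pi_f^{-1}(x)$ is one point for $x\notin\Gamma e_\Gamma$ and two points for $x\in\Gamma e_\Gamma$, and $f\circ\pi_f$ on $X_f\setminus\pi_f^{-1}(e_\Gamma)$ extends continuously to $X_f$. Null: for every sequence $\{s_n\}$ in $\Gamma$ and finite open cover $\mathcal U$, $\limsup_n\frac1n\log N(\bigvee_{i=1}^n s_i^{-1}\mathcal U)=0$, $N$ the minimal subcover size. *)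

From HB Require Import structures.
From mathcomp Require Import all_boot all_order all_algebra.
From mathcomp Require Import monoid.
From mathcomp Require Import all_classical all_reals all_analysis.

Set Implicit Arguments.
Unset Strict Implicit.
Unset Printing Implicit Defensive.

Import Order.TTheory GRing.Theory Num.Theory.
Local Open Scope classical_set_scope.

Section GroupDefs.
Variable G : groupType.
Local Open Scope group_scope.

Definition is_subgroup (H : set G) : Prop :=
  H 1 /\ (forall x y, H x -> H y -> H (x * y^-1)).

Definition is_normal_subgroup (H : set G) : Prop :=
  is_subgroup H /\ (forall g h, H h -> H (g^-1 * h * g)).

Definition lcoset (g : G) (H : set G) : set G := (fun h => g * h) @` H.

Definition finite_index (H : set G) : Prop :=
  exists s : seq G, forall g, exists2 r, r \in s & H (r^-1 * g).

(* [H : K] > 2 (for K a subgroup of H): H contains three elements lying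
   in pairwise distinct left cosets of K *)
Definition index_gt2 (H K : set G) : Prop :=
  exists a b c, [/\ H a, H b, H c &
    [/\ ~ K (a^-1 * b), ~ K (a^-1 * c) & ~ K (b^-1 * c)]].

(* A point of X is a compatible sequence of cosets: x k is a left coset
   of Gam k and x (k+1) is contained in x k. *)
Definition Xpoint (Gam : nat -> set G) (x : nat -> set G) : Prop :=
  (forall k, exists g, x k = lcoset g (Gam k)) /\
  (forall k, x k.+1 `<=` x k).

Definition Xe (Gam : nat -> set G) : nat -> set G := Gam.

Definition Xact (g : G) (x : nat -> set G) : nat -> set G :=
  fun k => lcoset g (x k).

(* X_+ : union of the cylinders C_n = pi_n^{-1}(gamma_n Gamma_n), n >= 2 *)
Definition Xplus (Gam : nat -> set G) (gam : nat -> G) (x : nat -> set G)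
  : Prop := exists2 k, (1 <= k)%N & x k = lcoset (gam k) (Gam k).

End GroupDefs.

Definition fsign (R : realType) (G : groupType) (Gam : nat -> set G)
  (gam : nat -> G) (x : nat -> set G) : R :=
  if `[< Xplus Gam gam x >] then 1%R else (-1)%R.

Section Covers.
Variable Y : Type.

Definition mem_union (V : seq (set Y)) (y : Y) : Prop :=
  exists2 i, (i < size V)%N & nth set0 V i y.

Definition is_cover (V : seq (set Y)) : Prop := forall y, mem_union V y.

Definition subcover_of_size (V : seq (set Y)) (m : nat) : bool :=
  `[< exists I : seq nat, [/\ size I = m,
        (forall i, i \in I -> (i < size V)%N) &
        (forall y, mem_union V y -> exists2 i, i \in I & nth set0 V i y)] >].

Lemma subcover_exists (V : seq (set Y)) : exists m, subcover_of_size V m.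
Proof.
exists (size V); apply/asboolP; exists (iota 0 (size V)); split.
- by rewrite size_iota.
- by move=> i; rewrite mem_iota.
- by move=> y [i Hi Hy]; exists i => //; rewrite mem_iota.
Qed.

Definition Ncover (V : seq (set Y)) : nat := ex_minn (subcover_exists V).

Definition join2 (V W : seq (set Y)) : seq (set Y) :=
  [seq A `&` B | A <- V, B <- W].

End Covers.

Section Null.
Variables (R : realType) (G : groupType) (Y : topologicalType).
Local Open Scope group_scope.

Definition join_pullbacks (T : G -> Y -> Y) (s : nat -> G)
  (U : seq (set Y)) (n : nat) : seq (set Y) :=
  foldr (fun i acc => join2 [seq T (s i) @^-1` A | A <- U] acc)
        [:: setT] (iota 1 n).

Definition is_null_action (T : G -> Y -> Y) : Prop :=
  forall (s : nat -> G) (U : seq (set Y)),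
    (forall i, (i < size U)%N -> open (nth set0 U i)) ->
    is_cover U ->
    limn_esup (fun n => ((ln (Ncover (join_pullbacks T s U n))%:R
                           / n%:R)%R)%:E : \bar R) = 0%E.

Definition is_continuous_action (T : G -> Y -> Y) : Prop :=
  [/\ forall y, T 1 y = y,
      forall g h y, T (g * h) y = T g (T h y) &
      forall g, continuous (T g)].

Definition is_minimal_action (T : G -> Y -> Y) : Prop :=
  forall y, closure (range (fun g => T g y)) = [set: Y].

End Null.

From HB Require Import structures.
From mathcomp Require Import all_boot all_order all_algebra.
From mathcomp Require Import monoid.
From mathcomp Require Import all_classical all_reals all_analysis.
From mathcomp Require Import finmap zify lra.
Import Order.TTheory GRing.Theory Num.Theory numFieldNormedType.Exports.

Set Implicit Arguments.
Unset Strict Implicit.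
Unset Printing Implicit Defensive.

Local Open Scope classical_set_scope.

(* The space Y = X_f is separated by the coordinates [pi _ k] and by the
   continuous +-1-valued maps [F \o T h]: over each translate of e_Gamma, F
   takes both values, the two points being limits of points of X_+ and of
   X_-.  By compactness an open cover is thus refined by the classes of one
   level m and of finitely many signs [F \o T h], h in H, so the join of its
   pull-backs by s_1, ..., s_n is refined by the classes of pi_m and of the
   signs [F \o T g], g in S = H s_1 ... s_n.  There are polynomially many sign
   patterns on S: either some g in S moves y into the fibre over e_Gamma,
   which determines y up to one bit, or the pattern is that of
   {g in S | g x in X_+} with x = pi y.  As the cylinders C_j are disjoint,
   the latter is determined by an element g0 of S moving x into the deepest
   cylinder C_K and by the sizes of two families of subsets of S that are
   monotone in K.  Hence the covering numbers grow polynomially in n. *)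

Section Covers.
Variable Y : Type.

Lemma nth_join2 (V W : seq (set Y)) i j :
  (i < size V)%N -> (j < size W)%N ->
  exists2 t, (t < size (join2 V W))%N &
    nth set0 (join2 V W) t = nth set0 V i `&` nth set0 W j.
Proof.
elim: V i => [|A V IH] [|i] //= hi hj; rewrite /join2 /=.
- exists j; first by rewrite size_cat size_map ltn_addr.
  by rewrite nth_cat size_map hj (nth_map set0).
- have [t ht e] := IH i hi hj.
  exists (size W + t)%N; first by rewrite size_cat size_map ltn_add2l.
  by rewrite nth_cat size_map ltnNge leq_addr /= addKn.
Qed.

Lemma Ncover_le_card (K : finType) (code : Y -> K -> Prop) (V : seq (set Y)) :
  (forall y, exists k, code y k) ->
  (forall k y, code y k ->
     exists2 t, (t < size V)%N & code^~ k `<=` nth set0 V t) ->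
  (Ncover V <= #|K|)%N.
Proof.
move=> code_total code_sub.
have /choice[f hf] : forall k, exists t, forall y, code y k ->
    (t < size V)%N /\ code^~ k `<=` nth set0 V t.
  move=> k; have [[y /code_sub [t ht sub]]|none] := pselect (exists y, code y k).
    by exists t.
  by exists 0%N => y yk; exfalso; apply: none; exists y.
pose I := [seq f k | k <- enum K & `[< exists y, code y k >]].
rewrite /Ncover; case: ex_minnP => m _ /(_ (size I)) m_min.
apply: leq_trans (m_min _) _; last first.
  by rewrite size_map size_filter cardE count_size.
apply/asboolP; exists I; split => //.
  by move=> i /mapP[k]; rewrite mem_filter => /andP[/asboolP[y /hf[fk _]] _] ->.
move=> y _; have [k yk] := code_total y.
exists (f k); last exact: (hf k y yk).2.
by apply: map_f; rewrite mem_filter mem_enum andbT; apply/asboolP; exists y.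
Qed.

End Covers.

Lemma join_pullbacks_sub (G : groupType) (Y : topologicalType)
    (T : G -> Y -> Y) (s : nat -> G) (U : seq (set Y)) (n : nat) (W : set Y) :
  (forall i, (0 < i <= n)%N ->
     exists2 j, (j < size U)%N & W `<=` T (s i) @^-1` nth set0 U j) ->
  exists2 t, (t < size (join_pullbacks T s U n))%N &
    W `<=` nth set0 (join_pullbacks T s U n) t.
Proof.
move=> hW; rewrite /join_pullbacks.
have : {in iota 1 n, forall i,
    exists2 j, (j < size U)%N & W `<=` T (s i) @^-1` nth set0 U j}.
  by move=> i; rewrite mem_iota add1n ltnS => /hW.
elim: (iota 1 n) => [|i l IH] hl /=; first by exists 0%N.
have [t ht Wt] := IH (fun k kl => hl k (@mem_behead _ (i :: l) _ kl)).
have [j hj Wj] := hl i (mem_head _ _).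
have hj' : (j < size [seq T (s i) @^-1` A | A <- U])%N by rewrite size_map.
have [t' ht' e] := nth_join2 hj' ht.
exists t' => // y Wy; rewrite e (nth_map set0) //.
by split; [exact: Wj|exact: Wt].
Qed.

Lemma limn_esup_ln_poly (R : realType) (a : nat -> nat) (A d : nat) :
  (forall n, (a n <= A * n.+1 ^ d)%N) ->
  limn_esup (fun n => ((ln (a n)%:R / n%:R)%R)%:E : \bar R) = 0%E.
Proof.
move=> aA; apply: (cvg_limn_einf_sup _).2.
apply: cvg_EFin; first exact: nearW.
apply/cvgrPdist_le => e e0 /=.
(* Beyond [c], A (2 n)^d <= (e n)^(d+1) / (d+1)! <= exp (e n). *)
pose c : R := ((A * 2 ^ d * d.+1`!)%:R / e ^+ d.+1)%R.
near=> n.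
have n0 : (0 < n)%N by near: n; exact: nbhs_infty_gt.
have cn : (c <= n%:R)%R by near: n; exact: nbhs_infty_ger.
rewrite sub0r normrN.
have [->|an0] := eqVneq (a n) 0%N; first by rewrite ln0 // mul0r normr0 ltW.
have an_pos : (0 < (a n)%:R :> R)%R by rewrite ltr0n lt0n.
rewrite ger0_norm ?divr_ge0 ?ln_ge0 ?ler1n ?lt0n //.
rewrite ler_pdivrMr ?ltr0n //.
rewrite -[leRHS]expRK ler_ln ?posrE ?expR_gt0 //.
have a_le : ((a n)%:R <= (A * 2 ^ d)%:R * n%:R ^+ d :> R)%R.
  rewrite -natrX -natrM ler_nat -mulnA -expnMn.
  have pow_le k : (n.+1 ^ k <= (2 * n) ^ k)%N.
    by elim: k => // k IH; rewrite !expnS leq_mul //; lia.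
  by apply: leq_trans (aA n) _; rewrite leq_mul2l pow_le orbT.
apply: (le_trans a_le).
apply: le_trans (expR_ge1Dxn d (mulr_ge0 (ltW e0) (ler0n R n))).
apply: ler_wpDl => //.
have en_large : ((A * 2 ^ d)%:R * (d.+1)`!%:R <= e ^+ d.+1 * n%:R :> R)%R.
  by rewrite -natrM mulrC -ler_pdivrMr ?exprn_gt0.
rewrite ler_pdivlMr ?ltr0n ?fact_gt0 //.
have -> : ((e * n%:R) ^+ d.+1 = (e ^+ d.+1 * n%:R) * n%:R ^+ d :> R)%R.
  by rewrite exprMn (exprSr (n%:R)) mulrA mulrAC.
by rewrite mulrAC ler_wpM2r ?exprn_ge0.
Unshelve. all: by end_near.
Qed.

Lemma cubic_count_le c h n k : (k <= h * n)%N ->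
  (c * (k.+1 * 2 + (k.+1 * k.+1 * k.+1).+1) <= c * 4 * h.+1 ^ 3 * n.+1 ^ 3)%N.
Proof.
move=> kn; have k_le : (k.+1 <= h.+1 * n.+1)%N by nia.
have k3_le : (k.+1 * k.+1 * k.+1 <= (h.+1 * n.+1) ^ 3)%N.
  by rewrite !expnS expn0 muln1 mulnA !leq_mul.
have k_le3 : (k.+1 <= k.+1 * k.+1 * k.+1)%N by rewrite -mulnA leq_pmulr.
have -> : (c * 4 * h.+1 ^ 3 * n.+1 ^ 3 = c * (4 * (h.+1 * n.+1) ^ 3))%N.
  by rewrite expnMn !mulnA.
by rewrite leq_mul2l; apply/orP; right; lia.
Qed.

Definition locally_constant (Y : topologicalType) (Z : Type) (f : Y -> Z) :=
  forall y, \forall y' \near y, f y' = f y.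

Lemma locally_constant_closed (Y : topologicalType) (Z : Type) (f : Y -> Z) z :
  locally_constant f -> closed [set y | f y = z].
Proof.
move=> fc; rewrite -[X in closed X]setCK; apply: open_closedC.
rewrite openE => y /= fyz; rewrite /interior.
by apply: filterS (fc y) => y' /= ->.
Qed.

Lemma compact_cluster_seq (Y : topologicalType) (u : nat -> Y) :
  compact [set: Y] ->
  exists w, forall P : set Y, closed P -> (\forall K \near \oo, P (u K)) -> P w.
Proof.
move=> cY; have [w [_ w_cl]] := cY (u @ \oo) (fmap_proper_filter _ _) filterT.
exists w => P cP uP; rewrite (closure_id P).1 // => B wB.
by have [y [Py By]] := w_cl P B uP wB; exists y.
Qed.

(* [compact_cover] is only available for pointed spaces. *)
Definition pointed_at (Y : topologicalType) (y0 : Y) : Type := Y.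
HB.instance Definition _ (Y : topologicalType) (y0 : Y) :=
  Topological.copy (@pointed_at Y y0) Y.
HB.instance Definition _ (Y : topologicalType) (y0 : Y) :=
  isPointed.Build (@pointed_at Y y0) y0.

Lemma compact_cover_compact (Y : topologicalType) (A : set Y) :
  compact A -> cover_compact A.
Proof.
move=> cA I D f fo Af.
have [[y _]|/forallNP Y0] := pselect (exists y : Y, True).
  have : @compact (@pointed_at Y y) A by [].
  by rewrite compact_cover; apply.
by exists fset0 => // y; have := Y0 y.
Qed.

Section LocallyConstantFamily.
Variables (Y : topologicalType) (I : choiceType) (Z : Type) (phi : I -> Y -> Z).
Hypothesis phi_lc : forall i, locally_constant (phi i).

Definition atom (D : seq I) (y : Y) : set Y :=
  [set y' | forall i, i \in D -> phi i y' = phi i y].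

Lemma atom_nbhs D y : nbhs y (atom D y).
Proof.
elim: D => [|i D IH]; first by apply: nearW => y' i; rewrite in_nil.
apply: filterS (filterI (phi_lc i y) IH) => y' [eqi eqD] j.
by rewrite in_cons => /orP[/eqP ->|/eqD].
Qed.

Lemma open_atom D y : open (atom D y).
Proof.
rewrite openE => y' y'y; rewrite /interior.
by apply: filterS (atom_nbhs D y') => w wy' i iD; rewrite wy' // y'y.
Qed.

Hypothesis phi_sep : forall y y', y <> y' -> exists i, phi i y <> phi i y'.
Hypothesis Ycompact : compact [set: Y].

Lemma atom_sub_open (A : set Y) y : open A -> A y -> exists D, atom D y `<=` A.
Proof.
move=> oA Ay.
have cAc : cover_compact (~` A).
  apply/compact_cover_compact/(subclosed_compact _ Ycompact) => //.
  exact: open_closedC.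
have Ac_cov : ~` A `<=` cover [set: I] (fun i => ~` [set w | phi i w = phi i y]).
  move=> w nAw; have [|i ni] := @phi_sep y w.
    by move=> e; apply: nAw; rewrite -e.
  by exists i => // e; apply: ni.
have [D _ Dcov] := cAc I [set: I] (fun i => ~` [set w | phi i w = phi i y])
  (fun i _ => closed_openC (locally_constant_closed (phi_lc i))) Ac_cov.
exists D => w wy; apply: contrapT => /Dcov[i Di]; apply; exact: wy.
Qed.

Lemma atoms_refine_cover (U : seq (set Y)) :
  (forall j, (j < size U)%N -> open (nth set0 U j)) -> is_cover U ->
  exists D, forall y, exists2 j, (j < size U)%N & atom D y `<=` nth set0 U j.
Proof.
move=> oU cU.
have /choice[f hf] : forall y, exists p : nat * seq I,
    (p.1 < size U)%N /\ atom p.2 y `<=` nth set0 U p.1.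
  move=> y; have [j jU Uy] := cU y.
  by have [D hD] := atom_sub_open (oU j jU) Uy; exists (j, D).
have Ycov : [set: Y] `<=` cover [set: Y] (fun y => atom (f y).2 y).
  by move=> w _; exists w.
have [ys _ ys_cov] := compact_cover_compact Ycompact
  (fun y _ => open_atom (f y).2 y) Ycov.
exists (flatten [seq (f y).2 | y <- ys]) => w.
have [y0 y0ys wy0] := ys_cov w Logic.I.
exists (f y0).1; first exact: (hf y0).1.
move=> w' w'w; apply: (hf y0).2 => i iD; rewrite -(wy0 i iD); apply: w'w.
by apply/flattenP; exists (f y0).2 => //; apply/mapP; exists y0.
Qed.

End LocallyConstantFamily.

Lemma count_sub_eq (T : eqType) (p q : pred T) (s : seq T) :
  {in s, subpred p q} -> count p s = count q s -> {in s, p =1 q}.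
Proof.
move=> pq; rewrite -!size_filter => eq_size x xs.
have sub : subseq [seq y <- s | p y] [seq y <- s | q y].
  rewrite subseq_filter filter_subseq andbT; apply/allP => y.
  by rewrite mem_filter => /andP[/pq py /py].
have fe : [seq y <- s | p y] = [seq y <- s | q y].
  by apply/eqP; rewrite -(size_subseq_leqif sub).2 eq_size.
by rewrite -[p x]andbT -xs -mem_filter fe mem_filter xs andbT.
Qed.

Lemma inord_inj n i j : (i <= n)%N -> (j <= n)%N ->
  inord i = inord j :> 'I_n.+1 -> i = j.
Proof. by move=> i_n j_n /(congr1 val); rewrite /= !inordK. Qed.

Section Cosets.
Variable G : groupType.
Local Open Scope group_scope.

Lemma lcoset1 (H : set G) : lcoset 1 H = H.
Proof.
rewrite eqEsubset; split=> x; first by case=> h hh <-; rewrite mul1g.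
by move=> hx; exists x => //; rewrite mul1g.
Qed.

Lemma lcosetM (H : set G) g a : lcoset g (lcoset a H) = lcoset (g * a) H.
Proof.
rewrite eqEsubset; split=> x.
  by case=> _ [h hh <-] <-; exists h => //; rewrite mulgA.
by case=> h hh <-; exists (a * h); [exists h|rewrite mulgA].
Qed.

Lemma Xact1 (x : nat -> set G) : Xact 1 x = x.
Proof. by apply: funext => k; rewrite /Xact lcoset1. Qed.

Lemma XactM g h (x : nat -> set G) : Xact g (Xact h x) = Xact (g * h) x.
Proof. by apply: funext => k; rewrite /Xact lcosetM. Qed.

End Cosets.

Section SubgroupChain.
Variable G : groupType.
Local Open Scope group_scope.
Variable Gam : nat -> set G.
Hypothesis Gam_normal : forall k, is_normal_subgroup (Gam k).
Hypothesis Gam_decr : forall k, Gam k.+1 `<=` Gam k.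

Lemma Gam1 k : Gam k 1.
Proof. by case: (Gam_normal k) => [[]]. Qed.

Lemma GamV k x : Gam k x -> Gam k x^-1.
Proof. by move=> h; have := (Gam_normal k).1.2 _ _ (Gam1 k) h; rewrite mul1g. Qed.

Lemma GamM k x y : Gam k x -> Gam k y -> Gam k (x * y).
Proof.
by move=> hx /GamV hy; have := (Gam_normal k).1.2 _ _ hx hy; rewrite invgK.
Qed.

Lemma GamJ k g h : Gam k h -> Gam k (g^-1 * h * g).
Proof. exact: (Gam_normal k).2. Qed.

Lemma Gam_sub j k : (j <= k)%N -> Gam k `<=` Gam j.
Proof.
move=> /subnK <-; elim: (k - j)%N => [|i IH] x; first by [].
by rewrite addSn => /Gam_decr /IH.
Qed.

Lemma Gam_sym k a b : Gam k (a^-1 * b) -> Gam k (b^-1 * a).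
Proof. by move/GamV; rewrite invgM invgK. Qed.

Lemma Gam_trans k a b c :
  Gam k (a^-1 * b) -> Gam k (b^-1 * c) -> Gam k (a^-1 * c).
Proof. by move=> ab bc; have := GamM ab bc; rewrite -mulgA mulVKg. Qed.

Lemma lcosetP k g x : lcoset g (Gam k) x <-> Gam k (g^-1 * x).
Proof.
split; first by case=> h hh <-; rewrite mulKg.
by move=> h; exists (g^-1 * x) => //; rewrite mulVKg.
Qed.

Lemma lcoset_eqP k a b :
  lcoset a (Gam k) = lcoset b (Gam k) <-> Gam k (a^-1 * b).
Proof.
split=> [e|ab].
  by apply/lcosetP; rewrite e; apply/lcosetP; rewrite mulVg; exact: Gam1.
by rewrite eqEsubset; split=> x /lcosetP hx; apply/lcosetP;
  [apply: Gam_trans (Gam_sym ab) hx|apply: Gam_trans ab hx].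
Qed.

Lemma lcoset_Gam k g : Gam k g -> lcoset g (Gam k) = Gam k.
Proof.
by move=> h; rewrite -[RHS]lcoset1; apply/lcoset_eqP; rewrite mulg1; exact: GamV.
Qed.

Lemma Xe_point : Xpoint Gam (Xe Gam).
Proof. by split => k; [exists 1; rewrite lcoset1|exact: Gam_decr]. Qed.

Lemma Xact_Xe_neq g k : ~ Gam k g -> Xact g (Xe Gam) <> Xe Gam.
Proof.
move=> ng e; apply: ng; have /= := congr1 (fun x => x k) e.
rewrite /Xact /Xe -{2}(lcoset1 (Gam k)) => /(lcoset_eqP k g 1).
by rewrite mulg1 => /GamV; rewrite invgK.
Qed.

Definition nested (a : nat -> G) :=
  forall j k, (j <= k)%N -> Gam j ((a j)^-1 * a k).

Lemma Xpoint_rep x : Xpoint Gam x ->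
  exists a, (forall k, x k = lcoset (a k) (Gam k)) /\ nested a.
Proof.
case=> /choice[a ha] x_decr; exists a; split => // j k /subnK <-.
elim: (k - j)%N => [|i IH]; first by rewrite mulVg; exact: Gam1.
apply: Gam_trans IH _; rewrite addSn; apply: (Gam_sub (leq_addl i j)).
apply/lcosetP.
rewrite -ha; apply: x_decr; rewrite ha; apply/lcosetP.
by rewrite mulVg; exact: Gam1.
Qed.

Lemma Xpoint_eq_le x x' m k : Xpoint Gam x -> Xpoint Gam x' ->
  x m = x' m -> (k <= m)%N -> x k = x' k.
Proof.
move=> /Xpoint_rep[a [ha na]] /Xpoint_rep[a' [ha' na']].
rewrite !ha !ha' => /lcoset_eqP e km; apply/lcoset_eqP.
apply: Gam_trans (na k m km) _.
exact: Gam_trans (Gam_sub km e) (Gam_sym (na' k m km)).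
Qed.

Lemma index_gt2_avoid K c : index_gt2 (Gam K) (Gam K.+1) ->
  exists d, [/\ Gam K d, ~ Gam K.+1 d & ~ Gam K.+1 (c^-1 * d)].
Proof.
case=> a [b [e [ha hb he [nab nae nbe]]]].
apply: contrapT => none.
have cosets2 x : Gam K x -> Gam K.+1 x \/ Gam K.+1 (c^-1 * x).
  move=> hx; apply: contrapT => /not_orP[n1 n2]; apply: none; exists x.
  by split.
have same x y : Gam K x -> Gam K y ->
    (Gam K.+1 x <-> Gam K.+1 y) -> Gam K.+1 (x^-1 * y).
  move=> /cosets2[x1|x2] /cosets2[y1|y2] xy.
  - exact: GamM (GamV x1) y1.
  - exact: GamM (GamV x1) (xy.1 x1).
  - exact: GamM (GamV (xy.2 y1)) y1.
  - exact: Gam_trans (Gam_sym x2) y2.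
(* Two of [a], [b], [e] lie in the same coset, [Gam K.+1] or [c Gam K.+1]. *)
have [A|A] := pselect (Gam K.+1 a); have [B|B] := pselect (Gam K.+1 b);
  have [E|E] := pselect (Gam K.+1 e);
  first [by apply: nab; apply: same => //; tauto
        |by apply: nae; apply: same => //; tauto
        |by apply: nbe; apply: same => //; tauto].
Qed.

Lemma Gam_mull k g a b : Gam k (a^-1 * b) -> Gam k ((g * a)^-1 * (g * b)).
Proof. by rewrite invgM -mulgA mulKg. Qed.

Lemma Gam_mulr k a b c : Gam k (a^-1 * b) -> Gam k ((a * c)^-1 * (b * c)).
Proof. by move=> /(GamJ c); rewrite invgM !mulgA. Qed.

Variable gam : nat -> G.
Hypothesis gam_step :
  forall k, (0 < k)%N -> Gam k.-1 (gam k) /\ ~ Gam k (gam k).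

Lemma gam_sub j k : (j < k)%N -> Gam j (gam k).
Proof.
move=> jk; have jk' : (j <= k.-1)%N by rewrite -ltnS (ltn_predK jk).
exact/(Gam_sub jk')/(gam_step (leq_ltn_trans (leq0n j) jk)).1.
Qed.

Lemma Xact_Xe_notXplus K b :
  Gam K b -> ~ Gam K.+1 b -> ~ Gam K.+1 ((gam K.+1)^-1 * b) ->
  ~ Xplus Gam gam (Xact b (Xe Gam)).
Proof.
move=> bK nbK1 nbgam [j j0]; rewrite /Xact /Xe => /lcoset_eqP bj.
have [jK|Kj|jK] := ltngtP j K.+1.
- apply: (gam_step j0).2.
  by have := GamM (Gam_sub (ltnSE jK) bK) bj; rewrite mulVKg.
- apply: nbK1; have := GamM (Gam_sub (ltnW Kj) bj) (GamV (gam_sub Kj)).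
  by rewrite mulgK => /GamV; rewrite invgK.
- by apply: nbgam; rewrite -jK; exact: Gam_sym.
Qed.

(* [g x] lies in the cylinder C_j of the paper, [x] being represented by [a]. *)
Definition in_cyl (a : nat -> G) (g : G) (j : nat) :=
  (0 < j)%N /\ Gam j ((g * a j)^-1 * gam j).

Lemma Xplus_XactP x a g : (forall k, x k = lcoset (a k) (Gam k)) ->
  Xplus Gam gam (Xact g x) <-> exists j, in_cyl a g j.
Proof.
move=> ha; split=> [[j j0]|[j [j0 /lcoset_eqP gaj]]].
  by rewrite /Xact ha lcosetM => /lcoset_eqP; exists j.
by exists j => //; rewrite /Xact ha lcosetM.
Qed.

Lemma in_cyl_uniq a g j j' : nested a ->
  in_cyl a g j -> in_cyl a g j' -> j = j'.
Proof.
move=> na; wlog jj' : j j' / (j <= j')%N.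
  move=> wl cj cj'; case: (leqP j j') => [|/ltnW] h; last apply/esym.
    exact: wl.
  exact: wl.
move: jj'; rewrite leq_eqVlt => /orP[/eqP -> //|jj'] [j0 cj] [_ cj'].
exfalso; apply: (gam_step j0).2.
have g_aj' : Gam j ((g * a j')^-1 * 1).
  apply: Gam_trans (Gam_sub (ltnW jj') cj') _.
  by rewrite mulg1; apply/GamV/gam_sub.
have := Gam_mull g (na j j' (ltnW jj')).
move=> /Gam_trans/(_ g_aj')/(Gam_trans (Gam_sym cj)).
by rewrite mulg1 => /GamV; rewrite invgK.
Qed.

Lemma in_cyl_max (S : seq G) a : nested a ->
  (exists2 g, g \in S & exists j, in_cyl a g j) ->
  exists g0 K, [/\ g0 \in S, in_cyl a g0 K &
    forall g j, g \in S -> in_cyl a g j -> (j <= K)%N].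
Proof.
move=> na [g gS [j gj]].
have /choice[depth hd] :
    forall g, exists k, (exists j, in_cyl a g j) -> in_cyl a g k.
  move=> h; have [[k hk]|nh] := pselect (exists j, in_cyl a h j); first by exists k.
  by exists 0%N => /nh.
pose P k := `[< exists2 g, g \in S & in_cyl a g k >].
have PK : exists k, P k by exists j; apply/asboolP; exists g.
have P_bound k : P k -> (k <= \max_(h <- S) depth h)%N.
  move=> /asboolP[h hS hk]; rewrite (in_cyl_uniq na hk (hd h (ex_intro _ k hk))).
  exact: leq_bigmax_seq.
case: (ex_maxnP PK P_bound) => K /asboolP[g0 g0S g0K] K_max.
by exists g0, K; split => // h k hS hk; apply: K_max; apply/asboolP; exists h.
Qed.

(* If [g0 x] lies in the deepest cylinder C_K met by [S x], the [g] of [S]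
   with [g x] in X_+ are those of [pattern_top g0 K] and [pattern_below g0 K]
   (in_cyl_pattern); the first family decreases and the second increases with
   K, so that they are determined by their sizes. *)
Definition pattern_top g0 K : pred G := fun g => `[< Gam K (g^-1 * g0) >].

Definition pattern_below g0 K : pred G := fun g =>
  `[< exists2 j, (0 < j < K)%N & Gam j ((g * g0^-1)^-1 * gam j) >].

Lemma pattern_top_le g0 K K' : (K <= K')%N ->
  subpred (pattern_top g0 K') (pattern_top g0 K).
Proof. by move=> KK' g /asboolP/(Gam_sub KK') ?; apply/asboolP. Qed.

Lemma pattern_below_le g0 K K' : (K <= K')%N ->
  subpred (pattern_below g0 K) (pattern_below g0 K').
Proof.
move=> KK' g /asboolP[j /andP[j0 jK] ?]; apply/asboolP; exists j => //.
by rewrite j0 (leq_trans jK KK').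
Qed.

Lemma in_cyl_below a g0 K j : nested a -> in_cyl a g0 K -> (j < K)%N ->
  Gam j ((a j)^-1 * g0^-1).
Proof.
move=> na [_ c0] jK.
have : Gam j ((g0 * a j)^-1 * 1).
  apply: Gam_trans (Gam_mull g0 (na j K (ltnW jK))) _.
  apply: Gam_trans (Gam_sub (ltnW jK) c0) _.
  by rewrite mulg1; apply/GamV/gam_sub.
by rewrite mulg1 invgM.
Qed.

Lemma in_cyl_pattern a g0 K g : nested a -> in_cyl a g0 K ->
  (forall j, in_cyl a g j -> (j <= K)%N) ->
  (exists j, in_cyl a g j) <-> pattern_top g0 K g || pattern_below g0 K g.
Proof.
move=> na c0 K_max; have [K0 g0K] := c0.
split=> [[j [j0 gj]]|/orP[/asboolP top|/asboolP[j /andP[j0 jK] gj]]].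
- have := K_max j (conj j0 gj); rewrite leq_eqVlt => /orP[/eqP jK|jK].
    apply/orP; left; apply/asboolP; rewrite -jK in g0K.
    by have := Gam_mulr (a j)^-1 (Gam_trans gj (Gam_sym g0K)); rewrite !mulgK jK.
  apply/orP; right; apply/asboolP; exists j; first by rewrite j0.
  exact: Gam_trans (Gam_mull g (Gam_sym (in_cyl_below na c0 jK))) gj.
- by exists K; split=> //; apply: Gam_trans (Gam_mulr (a K) top) g0K.
- exists j; split=> //.
  exact: Gam_trans (Gam_mull g (in_cyl_below na c0 jK)) gj.
Qed.

Lemma in_cyl_pattern_eq (S : seq G) a a' g0 K K' :
  nested a -> nested a' -> in_cyl a g0 K -> in_cyl a' g0 K' ->
  (forall g j, g \in S -> in_cyl a g j -> (j <= K)%N) ->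
  (forall g j, g \in S -> in_cyl a' g j -> (j <= K')%N) ->
  count (pattern_top g0 K) S = count (pattern_top g0 K') S ->
  count (pattern_below g0 K) S = count (pattern_below g0 K') S ->
  {in S, forall g, (exists j, in_cyl a g j) <-> (exists j, in_cyl a' g j)}.
Proof.
move=> na na' c0 c0' K_max K'_max.
wlog KK' : a a' K K' na na' c0 c0' K_max K'_max / (K <= K')%N.
  move=> wl eA eB g gS; have [KK'|/ltnW K'K] := leqP K K'.
    exact: (wl a a' K K').
  by apply: iff_sym; apply: (wl a' a K' K).
move=> eA eB g gS.
have tops := count_sub_eq (fun h _ => @pattern_top_le g0 _ _ KK' h) (esym eA).
have belows := count_sub_eq (fun h _ => @pattern_below_le g0 _ _ KK' h) eB.
rewrite (in_cyl_pattern na c0 (K_max g^~ gS)).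
by rewrite (in_cyl_pattern na' c0' (K'_max g^~ gS)) tops ?belows.
Qed.

Definition Xplus_code (S : seq G) (x : nat -> set G)
    (c : option ('I_(size S).+1 * 'I_(size S).+1 * 'I_(size S).+1)) : Prop :=
  match c with
  | None => forall g, g \in S -> ~ Xplus Gam gam (Xact g x)
  | Some (i, u, v) => exists a g0 K,
      [/\ (forall k, x k = lcoset (a k) (Gam k)) /\ nested a, g0 \in S,
          in_cyl a g0 K /\ (forall g j, g \in S -> in_cyl a g j -> (j <= K)%N),
          i = inord (index g0 S) &
          u = inord (count (pattern_top g0 K) S) /\
          v = inord (count (pattern_below g0 K) S)]
  end.
Arguments Xplus_code : clear implicits.

Lemma Xplus_code_total S x : Xpoint Gam x -> exists c, Xplus_code S x c.
Proof.
move=> /Xpoint_rep[a [ha na]].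
have [hS|none] := pselect (exists2 g, g \in S & exists j, in_cyl a g j); last first.
  by exists None => g gS gx; apply: none; exists g => //; apply/(Xplus_XactP g ha).
have [g0 [K [g0S c0 K_max]]] := in_cyl_max na hS.
by exists (Some (inord (index g0 S), inord (count (pattern_top g0 K) S),
                 inord (count (pattern_below g0 K) S))), a, g0, K.
Qed.

Lemma Xplus_code_eq S x x' c : Xplus_code S x c -> Xplus_code S x' c ->
  {in S, forall g, Xplus Gam gam (Xact g x) <-> Xplus Gam gam (Xact g x')}.
Proof.
case: c => [[[i u] v]|] /=; last first.
  by move=> nx nx' g gS; split=> [/(nx g gS)|/(nx' g gS)].
move=> [a [g0 [K [[ha na] g0S [c0 K_max] -> [-> ->]]]]].
move=> [a' [g0' [K' [[ha' na'] g0S' [c0' K'_max] ei [eA eB]]]]].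
have {ei} e0 : g0 = g0'.
  exact: index_inj g0S g0S' (inord_inj (index_size _ _) (index_size _ _) ei).
subst g0'; move=> g gS; rewrite (Xplus_XactP g ha) (Xplus_XactP g ha').
apply: (in_cyl_pattern_eq na na' c0 c0' K_max K'_max _ _ gS).
  exact: inord_inj (count_size _ _) (count_size _ _) eA.
exact: inord_inj (count_size _ _) (count_size _ _) eB.
Qed.

End SubgroupChain.

Section McMahonExtension.
Variables (R : realType) (G : groupType) (Gam : nat -> set G) (gam : nat -> G).
Local Open Scope group_scope.
Hypothesis Gam_normal : forall k, is_normal_subgroup (Gam k).
Hypothesis Gam_finite_index : forall k, finite_index (Gam k).
Hypothesis Gam_decr : forall k, Gam k.+1 `<=` Gam k.
Hypothesis Gam_index_gt2 : forall k, index_gt2 (Gam k) (Gam k.+1).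
Hypothesis gam_step :
  forall k, (0 < k)%N -> Gam k.-1 (gam k) /\ ~ Gam k (gam k).

Variables (Y : topologicalType) (T : G -> Y -> Y) (pi : Y -> nat -> set G).
Variables (F : Y -> R).
Hypothesis Y_compact : compact [set: Y].
Hypothesis T_action : is_continuous_action T.
Hypothesis pi_point : forall y, Xpoint Gam (pi y).
Hypothesis pi_lc : forall k, locally_constant (fun y => pi y k).
Hypothesis pi_equiv : forall g y, pi (T g y) = Xact g (pi y).
Hypothesis pi_fibre_orbit : forall x, Xpoint Gam x ->
  (exists g, x = Xact g (Xe Gam)) ->
  exists y1 y2, y1 <> y2 /\ pi @^-1` [set x] = [set y1; y2].
Hypothesis pi_fibre_other : forall x, Xpoint Gam x ->
  ~ (exists g, x = Xact g (Xe Gam)) -> exists y, pi @^-1` [set x] = [set y].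
Hypothesis F_cont : continuous F.
Hypothesis F_fsign : forall y, pi y <> Xe Gam -> F y = fsign R Gam gam (pi y).

Lemma T_inj g : injective (T g).
Proof.
have [T1 TM _] := T_action.
by move=> y y' /(congr1 (T g^-1)); rewrite -!TM mulVg !T1.
Qed.

Lemma F_T_Xe z g k : pi z = Xe Gam -> ~ Gam k g ->
  F (T g z) = fsign R Gam gam (Xact g (Xe Gam)).
Proof.
move=> ze ng; rewrite F_fsign pi_equiv ze //.
exact: (Xact_Xe_neq Gam_normal ng).
Qed.

Lemma Xe_fibre_limit (u : nat -> G) z c : pi z = Xe Gam ->
  (forall K, Gam K (u K)) -> (forall K, F (T (u K) z) = c) ->
  exists2 w, pi w = Xe Gam & F w = c.
Proof.
move=> ze uK uc.
have [w w_lim] := compact_cluster_seq (fun K => T (u K) z) Y_compact.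
exists w.
  apply: funext => k; apply: (w_lim [set y | pi y k = Gam k]).
    exact: locally_constant_closed (pi_lc k).
  exists k => // K /= kK; rewrite pi_equiv ze.
  exact/(lcoset_Gam Gam_normal)/(Gam_sub Gam_decr kK).
apply: (w_lim (F @^-1` [set c])); last exact: nearW.
by move/continuous_closedP : F_cont; apply; exact: closed_eq.
Qed.

Lemma Xe_fibre : exists wp wm, [/\ F wp = 1%R, F wm = (-1)%R &
  forall y, pi y = Xe Gam -> y = wp \/ y = wm].
Proof.
have [z1 [z2 [_ fib]]] := pi_fibre_orbit (Xe_point Gam_decr)
  (ex_intro _ 1%g (esym (Xact1 _))).
have fibE y : pi y = Xe Gam -> y = z1 \/ y = z2.
  by move=> ye; suff : [set z1; z2] y by []; rewrite -fib.
have z1e : pi z1 = Xe Gam.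
  by suff : (pi @^-1` [set Xe Gam]) z1 by []; rewrite fib; left.
(* [wp] and [wm] are limits of [T (gam K.+1) z1], lying over X_+, and of
   [T (b K) z1], lying over X_-. *)
have [wp wpe Fwp] : exists2 wp, pi wp = Xe Gam & F wp = 1%R.
  apply: (Xe_fibre_limit (u := fun K => gam K.+1) z1e).
    by move=> K; exact: (gam_sub Gam_decr gam_step (ltnSn K)).
  move=> K; rewrite (F_T_Xe z1e (gam_step (ltn0Sn K)).2) /fsign asboolT //.
  by exists K.+1.
have /choice[b hb] :=
  fun K => index_gt2_avoid Gam_normal (gam K.+1) (Gam_index_gt2 K).
have [wm wme Fwm] : exists2 wm, pi wm = Xe Gam & F wm = (-1)%R.
  apply: (Xe_fibre_limit (u := b) z1e); first by move=> K; case: (hb K).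
  move=> K; have [bK nbK nbgam] := hb K.
  rewrite (F_T_Xe z1e nbK) /fsign asboolF //.
  exact: (Xact_Xe_notXplus Gam_normal Gam_decr gam_step bK nbK nbgam).
have wpm : wp <> wm by move=> e; move: Fwp; rewrite e Fwm; lra.
exists wp, wm; split => // y /fibE; move: wpm.
by case: (fibE _ wpe) => ->; case: (fibE _ wme) => -> //; tauto.
Qed.

Lemma F_sign y : F y = 1%R \/ F y = (-1)%R.
Proof.
have [ye|yne] := pselect (pi y = Xe Gam).
  by have [wp [wm [Fwp Fwm /(_ y ye)[]->]]] := Xe_fibre; [left|right].
by rewrite F_fsign // /fsign; case: asboolP; [left|right].
Qed.

Lemma FT_locally_constant h : locally_constant (fun y => F (T h y)).
Proof.
have [_ _ Tc] := T_action; move=> y.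
have FT_cont : {for y, continuous (F \o T h)}.
  exact: continuous_comp (Tc h y) (@F_cont (T h y)).
apply: filterS (@cvgr_dist_lt _ _ _ _ _ _ _ FT_cont _ ltr01) => y' /=.
by case: (F_sign (T h y)) => ->; case: (F_sign (T h y')) => -> //;
  rewrite ltr_norml => /andP[]; lra.
Qed.

Definition level_sign (d : nat + G) (y : Y) : set G + R :=
  match d with inl k => inl (pi y k) | inr h => inr (F (T h y)) end.

Lemma level_sign_locally_constant d : locally_constant (level_sign d).
Proof.
case: d => [k|h] y /=.
  by apply: filterS (pi_lc k y) => y' ->.
by apply: filterS (FT_locally_constant h y) => y' ->.
Qed.

Lemma level_sign_separates y y' :
  y <> y' -> exists d, level_sign d y <> level_sign d y'.
Proof.
move=> yy'; have [pe|pne] := pselect (pi y = pi y'); last first.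
  have [k pk] : exists k, pi y k <> pi y' k.
    apply: contrapT => none; apply: pne; apply: funext => k.
    by apply: contrapT => nk; apply: none; exists k.
  by exists (inl k) => -[].
have [[g yg]|norb] := pselect (exists g, pi y = Xact g (Xe Gam)); last first.
  have [z fib] := pi_fibre_other (pi_point y) norb.
  apply: contrapT => _; apply: yy'.
  have [-> ->] : [set z] y /\ [set z] y' by rewrite -fib; split => //=; exact/esym.
  by [].
have [wp [wm [Fwp Fwm fibre]]] := Xe_fibre.
have [T1 TM _] := T_action.
have back z : pi z = pi y -> pi (T g^-1 z) = Xe Gam.
  by move=> zy; rewrite pi_equiv zy yg XactM mulVg Xact1.
have ne : T g^-1 y <> T g^-1 y' by move/T_inj.
exists (inr g^-1) => -[]; move: ne.
case: (fibre _ (back y erefl)) => ->;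
  case: (fibre _ (back y' (esym pe))) => -> // _; rewrite ?Fwp ?Fwm; lra.
Qed.

Lemma cover_refined_by_level_signs (U : seq (set Y)) :
  (forall j, (j < size U)%N -> open (nth set0 U j)) -> is_cover U ->
  exists m (H : seq G), forall y, exists2 j, (j < size U)%N &
    forall y', pi y' m = pi y m -> {in H, forall h, F (T h y') = F (T h y)} ->
    nth set0 U j y'.
Proof.
move=> oU cU.
have [D hD] := atoms_refine_cover level_sign_locally_constant
  level_sign_separates Y_compact oU cU.
pose lvl (d : nat + G) := if d is inl k then k else 0%N.
exists (\max_(d <- D) lvl d)%N.
exists (pmap (fun d => if d is inr h then Some h else None) D).
move=> y; have [j jU sub] := hD y; exists j => // y' ym yH.
apply: sub => -[k|h] dD /=; congr (_ _).
  apply: (Xpoint_eq_le Gam_normal Gam_decr (pi_point y') (pi_point y) ym).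
  exact: (@leq_bigmax_seq _ D xpredT lvl (inl k)).
by apply: yH; rewrite mem_pmap; apply/mapP; exists (inr h).
Qed.

Definition level_code m (rs : seq G) (y : Y) (c : 'I_(size rs).+1) :=
  exists2 r, r \in rs & c = inord (index r rs) /\ pi y m = lcoset r (Gam m).
Arguments level_code : clear implicits.

Lemma level_code_total m rs y :
  (forall g, exists2 r, r \in rs & Gam m (r^-1 * g)) ->
  exists c, level_code m rs y c.
Proof.
move=> rs_cov; have [a [ha _]] := Xpoint_rep Gam_normal Gam_decr (pi_point y).
have [r rs_r ra] := rs_cov (a m).
exists (inord (index r rs)), r => //; split => //; rewrite ha.
by apply/(lcoset_eqP Gam_normal); exact: (Gam_sym Gam_normal ra).
Qed.

Lemma level_code_eq m rs y y' c :
  level_code m rs y c -> level_code m rs y' c -> pi y m = pi y' m.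
Proof.
move=> [r rs_r [-> ->]] [r' rs_r' [ei ->]].
have := inord_inj (index_size _ _) (index_size _ _) ei.
by move/(index_inj r rs_r rs_r') ->.
Qed.

(* Either some [g] of [S] moves [y] into the fibre over e_Gamma, and then [y]
   is determined by [g] and the sign of [F (T g y)], or the signs are those
   of [fsign] and are encoded by [Xplus_code]. *)
Definition sign_code (S : seq G) (y : Y)
    (c : ('I_(size S).+1 * bool) +
         option ('I_(size S).+1 * 'I_(size S).+1 * 'I_(size S).+1)) :=
  match c with
  | inl (i, b) => exists2 g, g \in S &
      [/\ pi (T g y) = Xe Gam, i = inord (index g S) & b = (F (T g y) == 1%R)]
  | inr c => (forall g, g \in S -> pi (T g y) <> Xe Gam) /\
      Xplus_code Gam gam (pi y) c
  end.
Arguments sign_code : clear implicits.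

Lemma sign_code_total S y : exists c, sign_code S y c.
Proof.
have [[g gS ge]|none] := pselect (exists2 g, g \in S & pi (T g y) = Xe Gam).
  by exists (inl (inord (index g S), F (T g y) == 1%R)), g.
have [c yc] := Xplus_code_total Gam_normal Gam_decr gam_step S (pi_point y).
by exists (inr c); split => // g gS ge; apply: none; exists g.
Qed.

Lemma sign_code_eq S y y' c : sign_code S y c -> sign_code S y' c ->
  {in S, forall g, F (T g y) = F (T g y')}.
Proof.
case: c => [[i b]|c] /=; last first.
  move=> [ne yc] [ne' y'c] g gS.
  rewrite (F_fsign (ne g gS)) (F_fsign (ne' g gS)) !pi_equiv /fsign.
  have := Xplus_code_eq Gam_normal Gam_decr gam_step yc y'c gS.
  by move/asbool_equiv_eq ->.
move=> [g gS [ge -> ->]] [g' gS' [ge' ei eb]].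
have gg' := index_inj g gS gS' (inord_inj (index_size _ _) (index_size _ _) ei).
subst g'; suff /T_inj -> : T g y = T g y' by [].
have [wp [wm [Fwp Fwm fibre]]] := Xe_fibre.
have m11 : ((-1)%R == 1%R :> R) = false by apply/negbTE/eqP; lra.
by move: eb; case: (fibre _ ge) => ->; case: (fibre _ ge') => -> //;
  rewrite Fwp Fwm eqxx m11.
Qed.

Lemma Ncover_join_pullbacks_poly m (H : seq G) (U : seq (set Y)) :
  (forall y, exists2 j, (j < size U)%N &
    forall y', pi y' m = pi y m -> {in H, forall h, F (T h y') = F (T h y)} ->
    nth set0 U j y') ->
  exists A, forall s n, (Ncover (join_pullbacks T s U n) <= A * n.+1 ^ 3)%N.
Proof.
move=> refine; have [rs rs_cov] := Gam_finite_index m.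
have [_ TM _] := T_action.
exists ((size rs).+1 * 4 * (size H).+1 ^ 3)%N => s n.
pose S := [seq h * s i | h <- H, i <- iota 1 n].
pose K := ('I_(size rs).+1 * (('I_(size S).+1 * bool) +
  option ('I_(size S).+1 * 'I_(size S).+1 * 'I_(size S).+1)))%type.
pose code y (c : K) := level_code m rs y c.1 /\ sign_code S y c.2.
apply: (@leq_trans #|{: K}|).
  apply: (@Ncover_le_card _ _ code).
    move=> y; have [c1 ?] := level_code_total y rs_cov.
    by have [c2 ?] := sign_code_total S y; exists (c1, c2).
  move=> c y0 [l0 s0]; apply: join_pullbacks_sub => i /andP[i0 i_n].
  have [j jU sub] := refine (T (s i) y0); exists j => // y [l s'].
  apply: sub => [|h hH]; first by rewrite !pi_equiv /Xact (level_code_eq l l0).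
  rewrite -!TM; apply: (sign_code_eq s' s0); apply: allpairs_f => //.
  by rewrite mem_iota add1n ltnS i0.
rewrite card_prod card_sum card_prod card_option !card_prod card_bool !card_ord.
by apply: cubic_count_le; rewrite size_allpairs size_iota.
Qed.

Lemma mcmahon_null : is_null_action R T.
Proof.
move=> s U U_open U_cover.
have [m [H refine]] := cover_refined_by_level_signs U_open U_cover.
have [A hA] := Ncover_join_pullbacks_poly refine.
exact: limn_esup_ln_poly (hA s).
Qed.

End McMahonExtension.

(* Indexing: Gam k stands for the paper's Gamma_{k+1} (paper: n = 1,2,...),
   gam k for gamma_{k+1}; gam k is only used for k >= 1 (paper n >= 2). *)
Theorem theorem4p3 (R : realType) (G : groupType)
  (Gam : nat -> set G) (gam : nat -> G) :
  countable [set: G] ->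
  infinite_set [set: G] ->
  (forall k, is_normal_subgroup (Gam k) /\ finite_index (Gam k)) ->
  (forall k, Gam k.+1 `<` Gam k) ->
  \bigcap_k Gam k = [set 1%g] ->
  (forall k, index_gt2 (Gam k) (Gam k.+1)) ->
  (forall k, (1 <= k)%N -> Gam k.-1 (gam k) /\ ~ Gam k (gam k)) ->
  forall (Y : pseudoMetricType R) (T : G -> Y -> Y)
         (pi : Y -> nat -> set G),
    hausdorff_space Y -> compact [set: Y] ->
    is_continuous_action T -> is_minimal_action T ->
    (* pi is a continuous G-equivariant surjection onto X *)
    (forall y, Xpoint Gam (pi y)) ->
    (forall k y, \forall y' \near y, pi y' k = pi y k) ->
    (forall g y, pi (T g y) = Xact g (pi y)) ->
    (forall x, Xpoint Gam x -> exists y, pi y = x) ->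
    (* fibres: two points over the orbit of e, one point elsewhere *)
    (forall x, Xpoint Gam x -> (exists g, x = Xact g (Xe Gam)) ->
       exists y1 y2, y1 <> y2 /\ pi @^-1` [set x] = [set y1; y2]) ->
    (forall x, Xpoint Gam x -> ~ (exists g, x = Xact g (Xe Gam)) ->
       exists y, pi @^-1` [set x] = [set y]) ->
    (* f o pi on Y \ pi^-1(e) extends continuously to Y *)
    (exists F : Y -> R, continuous F /\
       forall y, pi y <> Xe Gam -> F y = fsign R Gam gam (pi y)) ->
    is_null_action R T.
Proof.
move=> _ _ Gam_fi Gam_lt _ Gam_gt2 gam_step Y T pi _ Y_compact T_action _.
move=> pi_point pi_lc pi_equiv _ fibre_orbit fibre_other [F [F_cont F_fsign]].
exact: (mcmahon_null (fun k => (Gam_fi k).1) (fun k => (Gam_fi k).2)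
  (fun k => properW (Gam_lt k)) Gam_gt2 gam_step Y_compact T_action
  pi_point pi_lc pi_equiv fibre_orbit fibre_other F_cont F_fsign).
Qed.
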